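(* Let $(G,\mathbf p)$ be a framework (with $\mathbf p$ pinned) such that $\dim(K)=1$, and let $k\ge1$ be an integer. If $(G,\mathbf p)$ has a $(1,k)$-flex, then it has a $(1,k)$-flex of the form $$\mathbf p(t)=\mathbf p+\mathbf p't+\mathbf p''t^2+\cdots+\mathbf p^{(k)}t^k$$ (a polynomial in $t$ with configuration coefficients $\mathbf p',\dots,\mathbf p^{(k)}$) with $\mathbf p^{(l)}\in\overline K$ for all $2\le l\le k$.
   Context: Fix a dimension $d$. A configuration is $\mathbf p=(\mathbf p_1,\dots,\mathbf p_n)$, $\mathbf p_i\in\mathbb R^d$; a framework $(G,\mathbf p)$ consists of a graph $G$ on $\{1,\dots,n\}$ and a configuration with $\mathbf p_i\ne\mathbf p_j$ on edges. A configuration $\mathbf q$ is in $\ell$-pinned position if $\mathbf q_1=0$ and, for $2\le i\le\ell+1$, $\mathbf q_i\in\mathrm{span}(e_1,\dots,e_{i-1})$; these form the $\ell$-pinned configuration space. If $\mathbf p$ has $\ell$-dimensional affine span, it is pinned if $\mathbf p_1,\dots,\mathbf p_{\ell+1}$ are affinely independent and $\mathbf p$ is in $\ell$-pinned position. All trajectories and flexes are $\ell$-pinned. A trajectory at $\mathbf p$ is an analytic non-constant map $t\mapsto\mathbf p(t)$ into $\ell$-pinned configuration space, $t\in[0,\varepsilon]$, $\mathbf p(0)=\mathbf p$. A $C^k$ function $\varphi(t)$ is $k$-vanishing if $\varphi^{(i)}(0)=0$ for $1\le i\le k$, and $k$-active if $(k-1)$-vanishing but not $k$-vanishing. With $\mathbf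 m(\mathbf q)=(|\mathbf q_i-\mathbf q_j|^2)_{ij\in E(G)}$, a $(j,k)$-flex is a $j$-active trajectory at $\mathbf p$ with $\mathbf m(\mathbf p(t))$ $k$-vanishing. $K$ is the linear space of $\ell$-pinned $\mathbf p'$ with $(\mathbf p_v-\mathbf p_w)\cdot(\mathbf p'_v-\mathbf p'_w)=0$ for all edges $vw$, and $\overline K$ is a fixed complementary linear subspace of $K$ in $\ell$-pinned configuration space. *)

From Stdlib Require Import Reals.
From Coquelicot Require Import Coquelicot.
Open Scope R_scope.

(* Vertices are indexed 0..n-1 (paper's vertex i is index i-1);
   coordinates are indexed 0..d-1 (paper's e_j is coordinate j-1).
   A configuration is a map  q : vertex -> coordinate -> R;
   only entries with vertex < n and coordinate < d are meaningful. *)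
Definition config := nat -> nat -> R.

Fixpoint sumR (m : nat) (f : nat -> R) : R :=
  match m with O => 0 | S m' => sumR m' f + f m' end.

Definition supported (n d : nat) (q : config) : Prop :=
  forall i j, (n <= i)%nat \/ (d <= j)%nat -> q i j = 0.

Definition dotR (d : nat) (x y : nat -> R) : R := sumR d (fun j => x j * y j).
Definition vsub (x y : nat -> R) : nat -> R := fun j => x j - y j.
Definition sqdist (d : nat) (x y : nat -> R) : R := dotR d (vsub x y) (vsub x y).

(* l-pinned position: q_1 = 0 and q_i in span(e_1..e_{i-1}) for 2 <= i <= l+1
   (0-based: q 0 = 0, and for 1 <= i <= l, coordinates j >= i of q i vanish) *)
Definition pinned_pos (n d l : nat) (q : config) : Prop :=
  supported n d q /\
  (forall j, q 0%nat j = 0) /\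
  (forall i j, (1 <= i <= l)%nat -> (i <= j)%nat -> q i j = 0).

Definition aff_indep_first (d l : nat) (p : config) : Prop :=
  forall c : nat -> R,
    (forall j, (j < d)%nat ->
       sumR l (fun i => c i * (p (S i) j - p 0%nat j)) = 0) ->
    forall i, (i < l)%nat -> c i = 0.

Definition in_aff_span_first (n d l : nat) (p : config) : Prop :=
  forall v, (v < n)%nat -> exists c : nat -> R,
    forall j, (j < d)%nat ->
      p v j - p 0%nat j = sumR l (fun i => c i * (p (S i) j - p 0%nat j)).

Definition pinned (n d l : nat) (p : config) : Prop :=
  (l < n)%nat /\
  aff_indep_first d l p /\ in_aff_span_first n d l p /\ pinned_pos n d l p.

Definition framework (n d : nat) (E : nat -> nat -> Prop) (p : config) : Prop :=
  supported n d p /\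
  forall v w, E v w ->
    (v < n)%nat /\ (w < n)%nat /\ v <> w /\ exists j, (j < d)%nat /\ p v j <> p w j.

Definition analytic_on (U : R -> Prop) (f : R -> R) : Prop :=
  forall t0, U t0 -> exists (r : R) (a : nat -> R), 0 < r /\
    forall t, Rabs (t - t0) < r -> is_pseries a (t - t0) (f t).

Definition trajectory (n d l : nat) (p : config) (q : R -> config) : Prop :=
  exists eps, 0 < eps /\
    (exists delta, 0 < delta /\ forall i j,
        analytic_on (fun t => - delta < t < eps + delta) (fun t => q t i j)) /\
    (forall i j, q 0 i j = p i j) /\
    (forall t, 0 <= t <= eps -> pinned_pos n d l (q t)) /\
    (exists t, 0 <= t <= eps /\ exists i j, q t i j <> p i j).

Definition vanishing (k : nat) (phi : R -> R) : Prop :=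
  forall m, (1 <= m <= k)%nat -> Derive_n phi m 0 = 0.

Definition traj_vanishing (n d k : nat) (q : R -> config) : Prop :=
  forall i j, (i < n)%nat -> (j < d)%nat -> vanishing k (fun t => q t i j).

Definition traj_active (n d k : nat) (q : R -> config) : Prop :=
  traj_vanishing n d (k - 1) q /\ ~ traj_vanishing n d k q.

Definition meas_vanishing (d : nat) (E : nat -> nat -> Prop) (k : nat)
  (q : R -> config) : Prop :=
  forall v w, E v w -> vanishing k (fun t => sqdist d (q t v) (q t w)).

Definition flex (n d l : nat) (E : nat -> nat -> Prop) (p : config)
  (a k : nat) (q : R -> config) : Prop :=
  trajectory n d l p q /\ traj_active n d a q /\ meas_vanishing d E k q.

Definition inK (n d l : nat) (E : nat -> nat -> Prop) (p p' : config) : Prop :=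
  pinned_pos n d l p' /\
  forall v w, E v w -> dotR d (vsub (p v) (p w)) (vsub (p' v) (p' w)) = 0.

Definition cfg0 : config := fun _ _ => 0.
Definition cfg_add (x y : config) : config := fun i j => x i j + y i j.
Definition cfg_scale (c : R) (x : config) : config := fun i j => c * x i j.

Definition dimK_one (n d l : nat) (E : nat -> nat -> Prop) (p : config) : Prop :=
  exists v, inK n d l E p v /\ v <> cfg0 /\
    forall w, inK n d l E p w -> exists c, w = cfg_scale c v.

Definition complement_K (n d l : nat) (E : nat -> nat -> Prop) (p : config)
  (Kbar : config -> Prop) : Prop :=
  Kbar cfg0 /\
  (forall x y, Kbar x -> Kbar y -> Kbar (cfg_add x y)) /\
  (forall c x, Kbar x -> Kbar (cfg_scale c x)) /\
  (forall x, Kbar x -> pinned_pos n d l x) /\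
  (forall x, Kbar x -> inK n d l E p x -> x = cfg0) /\
  (forall x, pinned_pos n d l x ->
     exists y z, inK n d l E p y /\ Kbar z /\ x = cfg_add y z).

Definition poly_traj (p : config) (k : nat) (c : nat -> config) : R -> config :=
  fun t i j => p i j + sumR k (fun m => c (S m) i j * t ^ (S m)).

From Stdlib Require Import Reals Lra Lia FunctionalExtensionality Classical.
From Coquelicot Require Import Coquelicot.
Open Scope R_scope.

(* Let a be the first-order Taylor coefficient of the given flex q. Since q is 1-active,
   a <> 0, and since the squared edge lengths along q are stationary to first order, a lies
   in K; as dim K = 1, every pinned configuration is g a + z with z in Kbar. Truncating q at
   order k gives a polynomial (1,k)-flex with first coefficient a. Its coefficients are then
   moved into Kbar one order at a time: if the coefficient of t^(s+1) is g a + z, the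
   reparametrisation t |-> t - g t^(s+1) fixes the coefficients of order <= s, replaces that
   of order s+1 by z, and keeps every squared edge length constant modulo t^(k+1); so does
   truncating again at order k. *)

Lemma sumR_ext N f g : (forall i, (i < N)%nat -> f i = g i) -> sumR N f = sumR N g.
Proof.
  induction N as [|N IH]; intros H; simpl; [reflexivity|].
  rewrite IH by (intros; apply H; lia). rewrite H by lia. reflexivity.
Qed.

Lemma sumR_eq0 N f : (forall i, (i < N)%nat -> f i = 0) -> sumR N f = 0.
Proof.
  induction N as [|N IH]; intros H; simpl; [reflexivity|].
  rewrite IH by (intros; apply H; lia). rewrite H by lia. ring.
Qed.

Lemma sumR_add N f g : sumR N (fun i => f i + g i) = sumR N f + sumR N g.
Proof. induction N as [|N IH]; simpl; [ring|]. rewrite IH. ring. Qed.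

Lemma sumR_scal N a f : sumR N (fun i => a * f i) = a * sumR N f.
Proof. induction N as [|N IH]; simpl; [ring|]. rewrite IH. ring. Qed.

Lemma sumR_split N M f : sumR (N + M) f = sumR N f + sumR M (fun i => f (N + i)%nat).
Proof.
  induction M as [|M IH]; simpl; [rewrite Nat.add_0_r; ring|].
  rewrite Nat.add_succ_r. simpl. rewrite IH. ring.
Qed.

Lemma sumR_shift N f : sumR (S N) f = f O + sumR N (fun i => f (S i)).
Proof.
  induction N as [|N IH]; [simpl; ring|].
  change (sumR (S (S N)) f) with (sumR (S N) f + f (S N)). rewrite IH. simpl. ring.
Qed.

Lemma sumR_update N s f g : (s < N)%nat -> (forall i, i <> s -> f i = g i) ->
  sumR N f = sumR N g + (f s - g s).
Proof.
  intros Hs Hfg. induction N as [|N IH]; [lia|]. simpl.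
  destruct (Nat.eq_dec s N) as [->|Hne].
  - rewrite (sumR_ext N f g) by (intros; apply Hfg; lia). ring.
  - rewrite IH, (Hfg N) by lia. ring.
Qed.

Lemma sum_f_R0_sumR f M : sum_f_R0 f M = sumR (S M) f.
Proof. induction M as [|M IH]; simpl; [ring|]. rewrite IH. reflexivity. Qed.

(** * Polynomial functions *)

Definition poly_eval (N : nat) (c : nat -> R) (t : R) : R := sumR N (fun i => c i * t ^ i).

Definition trunc_seq (N : nat) (c : nat -> R) (i : nat) : R := if Nat.ltb i N then c i else 0.

Lemma poly_eval_trunc N M c t : (N <= M)%nat -> poly_eval M (trunc_seq N c) t = poly_eval N c t.
Proof.
  intros H. replace M with (N + (M - N))%nat by lia. unfold poly_eval, trunc_seq.
  rewrite sumR_split, (sumR_eq0 (M - N)), Rplus_0_r.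
  - apply sumR_ext. intros i Hi. apply Nat.ltb_lt in Hi. rewrite Hi. reflexivity.
  - intros i _. replace (Nat.ltb (N + i) N) with false by (symmetry; apply Nat.ltb_ge; lia). ring.
Qed.

Lemma poly_eval_split a b c t :
  poly_eval (a + b) c t = poly_eval a c t + t ^ a * poly_eval b (fun i => c (a + i)%nat) t.
Proof.
  unfold poly_eval. rewrite sumR_split, <- sumR_scal. f_equal.
  apply sumR_ext. intros. rewrite pow_add. ring.
Qed.

Lemma poly_eval_add N c1 c2 t :
  poly_eval N (fun i => c1 i + c2 i) t = poly_eval N c1 t + poly_eval N c2 t.
Proof. unfold poly_eval. rewrite <- sumR_add. apply sumR_ext. intros; ring. Qed.

Lemma poly_eval_scal N a c t : poly_eval N (fun i => a * c i) t = a * poly_eval N c t.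
Proof. unfold poly_eval. rewrite <- sumR_scal. apply sumR_ext. intros; ring. Qed.

Lemma is_pseries_poly_eval N c t : is_pseries (trunc_seq N c) t (poly_eval N c t).
Proof.
  apply is_pseries_R, is_series_Reals. intros eps Heps. exists N. intros m Hm.
  rewrite sum_f_R0_sumR. fold (poly_eval (S m) (trunc_seq N c) t).
  rewrite poly_eval_trunc by lia. unfold R_dist. rewrite Rminus_diag, Rabs_R0. exact Heps.
Qed.

Definition is_poly (f : R -> R) : Prop := exists N c, forall t, f t = poly_eval N c t.

Lemma is_poly_ext f g : is_poly f -> (forall t, f t = g t) -> is_poly g.
Proof. intros [N [c H]] E. exists N, c. intros t. rewrite <- E. apply H. Qed.

Lemma is_poly_const a : is_poly (fun _ => a).
Proof. exists 1%nat, (fun _ => a). intros t. unfold poly_eval. simpl. ring. Qed.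

Lemma is_poly_add f g : is_poly f -> is_poly g -> is_poly (fun t => f t + g t).
Proof.
  intros [N1 [c1 H1]] [N2 [c2 H2]].
  exists (N1 + N2)%nat, (fun i => trunc_seq N1 c1 i + trunc_seq N2 c2 i). intros t.
  rewrite poly_eval_add, !poly_eval_trunc, H1, H2 by lia. reflexivity.
Qed.

Lemma is_poly_scal a f : is_poly f -> is_poly (fun t => a * f t).
Proof.
  intros [N [c H]]. exists N, (fun i => a * c i). intros t. rewrite poly_eval_scal, H. reflexivity.
Qed.

Lemma is_poly_sub f g : is_poly f -> is_poly g -> is_poly (fun t => f t - g t).
Proof.
  intros Hf Hg. apply is_poly_ext with (fun t => f t + (-1) * g t); [|intros; ring].
  apply is_poly_add; [exact Hf|]. apply is_poly_scal, Hg.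
Qed.

Lemma is_poly_mul_id f : is_poly f -> is_poly (fun t => t * f t).
Proof.
  intros [N [c H]]. exists (S N), (fun i => match i with O => 0 | S i' => c i' end). intros t.
  unfold poly_eval. rewrite sumR_shift, H. unfold poly_eval. rewrite <- sumR_scal.
  simpl. rewrite Rmult_0_l, Rplus_0_l. apply sumR_ext. intros; simpl; ring.
Qed.

Lemma is_poly_id : is_poly (fun t => t).
Proof.
  apply is_poly_ext with (fun t => t * 1); [apply is_poly_mul_id, is_poly_const | intros; ring].
Qed.

Lemma is_poly_tpow_mul m f : is_poly f -> is_poly (fun t => t ^ m * f t).
Proof.
  intros Hf. induction m as [|m IH].
  - apply is_poly_ext with f; [exact Hf | intros; simpl; ring].
  - apply is_poly_ext with (fun t => t * (t ^ m * f t)); [apply is_poly_mul_id, IH|].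
    intros; simpl; ring.
Qed.

Lemma is_poly_mul f g : is_poly f -> is_poly g -> is_poly (fun t => f t * g t).
Proof.
  intros [N [c H]] Hg.
  apply is_poly_ext with (fun t => poly_eval N c t * g t); [|intros; rewrite H; reflexivity].
  clear H. induction N as [|N IH].
  - apply is_poly_ext with (fun _ => 0); [apply is_poly_const|].
    intros; unfold poly_eval; simpl; ring.
  - apply is_poly_ext with (fun t => poly_eval N c t * g t + c N * (t ^ N * g t)).
    + apply is_poly_add; [exact IH|]. apply is_poly_scal, is_poly_tpow_mul, Hg.
    + intros t. unfold poly_eval. simpl. ring.
Qed.

Lemma is_poly_pow f m : is_poly f -> is_poly (fun t => f t ^ m).
Proof.
  intros Hf. induction m as [|m IH]; [apply (is_poly_const 1)|].
  apply is_poly_mul; [exact Hf | exact IH].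
Qed.

Lemma is_poly_comp f g : is_poly f -> is_poly g -> is_poly (fun t => f (g t)).
Proof.
  intros [N [c H]] Hg.
  apply is_poly_ext with (fun t => poly_eval N c (g t)); [|intros; rewrite H; reflexivity].
  clear H. induction N as [|N IH].
  - apply is_poly_ext with (fun _ => 0); [apply is_poly_const|].
    intros; unfold poly_eval; simpl; ring.
  - apply is_poly_ext with (fun t => poly_eval N c (g t) + c N * g t ^ N).
    + apply is_poly_add; [exact IH|]. apply is_poly_scal, is_poly_pow, Hg.
    + intros t. unfold poly_eval. simpl. ring.
Qed.

Lemma is_poly_sumR N (F : nat -> R -> R) :
  (forall j, is_poly (F j)) -> is_poly (fun t => sumR N (fun j => F j t)).
Proof.
  intros H. induction N as [|N IH]; [apply (is_poly_const 0)|].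
  apply is_poly_add; [exact IH | apply H].
Qed.

Lemma is_poly_pseries f : is_poly f -> exists a, forall t, is_pseries a t (f t).
Proof.
  intros [N [c H]]. exists (trunc_seq N c). intros t. rewrite H. apply is_pseries_poly_eval.
Qed.
(** * Local power series and Taylor coefficients *)

Definition local_pseries (a : nat -> R) (f : R -> R) : Prop :=
  exists r, 0 < r /\ forall t, Rabs t < r -> is_pseries a t (f t).

Lemma local_pseries_global a f : (forall t, is_pseries a t (f t)) -> local_pseries a f.
Proof. intros H. exists 1. split; [lra | intros t _; apply H]. Qed.

Lemma pseries_on_CV_radius a f r : (forall t, Rabs t < r -> is_pseries a t (f t)) ->
  forall x, Rabs x < r -> Rbar_lt (Rabs x) (CV_radius a).
Proof.
  intros H x Hx. destruct (Rbar_lt_dec (Rabs x) (CV_radius a)) as [Hlt|Hge]; [exact Hlt|].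
  exfalso. apply Rbar_not_lt_le in Hge.
  set (y := (Rabs x + r) / 2).
  assert (Hy0 : 0 <= y) by (unfold y; pose proof (Rabs_pos x); lra).
  assert (Hyr : Rabs y < r) by (rewrite Rabs_pos_eq by exact Hy0; unfold y; lra).
  apply (CV_disk_outside a y).
  - apply Rbar_le_lt_trans with (Rabs x); [exact Hge|]. simpl.
    rewrite (Rabs_pos_eq y) by exact Hy0. unfold y; lra.
  - apply ex_series_lim_0. exists (f y). apply is_pseries_R, H, Hyr.
Qed.

Lemma Derive_n_ext_interval f g m lo hi t : (forall u, lo < u < hi -> f u = g u) -> lo < t < hi ->
  Derive_n f m t = Derive_n g m t.
Proof.
  intros H Ht. apply Derive_n_ext_loc.
  assert (Hpos : 0 < Rmin (t - lo) (hi - t)) by (apply Rmin_glb_lt; lra).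
  exists (mkposreal _ Hpos). intros u Hu. apply H.
  change (Rabs (u - t) < Rmin (t - lo) (hi - t)) in Hu. apply Rabs_def2 in Hu.
  pose proof (Rmin_l (t - lo) (hi - t)). pose proof (Rmin_r (t - lo) (hi - t)). lra.
Qed.

Definition taylor_coef (f : R -> R) (m : nat) : R := Derive_n f m 0 / INR (Factorial.fact m).

Lemma Derive_n_taylor_coef f m : Derive_n f m 0 = taylor_coef f m * INR (Factorial.fact m).
Proof. unfold taylor_coef. field. apply INR_fact_neq_0. Qed.

Lemma taylor_coef_0 f : taylor_coef f 0 = f 0.
Proof. unfold taylor_coef. simpl. field. Qed.

Lemma taylor_coef_const_S c m : taylor_coef (fun _ => c) (S m) = 0.
Proof. unfold taylor_coef. rewrite Derive_n_const. unfold Rdiv. ring. Qed.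

Lemma taylor_coef_ext f g m : (forall t, f t = g t) -> taylor_coef f m = taylor_coef g m.
Proof. intros H. unfold taylor_coef. rewrite (Derive_n_ext f g m 0 H). reflexivity. Qed.

Lemma taylor_coef_local_pseries a f m : local_pseries a f -> taylor_coef f m = a m.
Proof.
  intros [r [Hr Ha]]. unfold taylor_coef.
  rewrite (Derive_n_ext_interval f (PSeries a) m (-r) r 0); [| | lra].
  - rewrite Derive_n_coef; [field; apply INR_fact_neq_0|].
    pose proof (pseries_on_CV_radius a f r Ha 0) as H0. rewrite Rabs_R0 in H0. apply H0, Hr.
  - intros u Hu. symmetry. apply is_pseries_unique, Ha, Rabs_def1; lra.
Qed.

Lemma taylor_coef_poly_eval N c m : taylor_coef (poly_eval N c) m = trunc_seq N c m.
Proof.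
  apply taylor_coef_local_pseries, local_pseries_global. intros; apply is_pseries_poly_eval.
Qed.

Lemma local_pseries_taylor_coef a f : local_pseries a f -> local_pseries (taylor_coef f) f.
Proof.
  intros Ha. pose proof Ha as [r [Hr H]]. exists r. split; [exact Hr|]. intros t Ht.
  apply (is_pseries_ext a); [|apply H, Ht]. intros m. symmetry. apply taylor_coef_local_pseries.
  exact Ha.
Qed.

Lemma is_poly_local_pseries f : is_poly f -> local_pseries (taylor_coef f) f.
Proof.
  intros Hf. destruct (is_poly_pseries f Hf) as [a Ha].
  apply (local_pseries_taylor_coef a), local_pseries_global, Ha.
Qed.

Lemma analytic_on_local_pseries U f : analytic_on U f -> U 0 -> local_pseries (taylor_coef f) f.
Proof.
  intros Han H0. destruct (Han 0 H0) as [r [a [Hr Ha]]].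
  apply (local_pseries_taylor_coef a). exists r. split; [exact Hr|]. intros t Ht.
  specialize (Ha t). rewrite !Rminus_0_r in Ha. apply Ha, Ht.
Qed.

Lemma is_poly_analytic_on U f : is_poly f -> analytic_on U f.
Proof.
  intros Hf t0 _.
  assert (Hshift : is_poly (fun u => f (u + t0))).
  { apply is_poly_comp; [exact Hf|]. apply is_poly_add; [apply is_poly_id | apply is_poly_const]. }
  destruct (is_poly_pseries _ Hshift) as [a Ha]. exists 1, a. split; [lra|]. intros t _.
  replace (f t) with (f ((t - t0) + t0)) by (f_equal; ring). apply Ha.
Qed.

Lemma local_pseries_min a b f g : local_pseries a f -> local_pseries b g ->
  exists r, 0 < r /\ forall t, Rabs t < r -> is_pseries a t (f t) /\ is_pseries b t (g t).
Proof.
  intros [r1 [Hr1 H1]] [r2 [Hr2 H2]]. exists (Rmin r1 r2). split; [apply Rmin_glb_lt; assumption|].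
  pose proof (Rmin_l r1 r2). pose proof (Rmin_r r1 r2).
  intros t Ht. split; [apply H1 | apply H2]; lra.
Qed.

Lemma local_pseries_add a b f g : local_pseries a f -> local_pseries b g ->
  local_pseries (PS_plus a b) (fun t => f t + g t).
Proof.
  intros Ha Hb. destruct (local_pseries_min a b f g Ha Hb) as [r [Hr H]].
  exists r. split; [exact Hr|]. intros t Ht. destruct (H t Ht) as [Hf Hg].
  exact (is_pseries_plus a b t _ _ Hf Hg).
Qed.

Lemma local_pseries_sub a b f g : local_pseries a f -> local_pseries b g ->
  local_pseries (PS_minus a b) (fun t => f t - g t).
Proof.
  intros Ha Hb. destruct (local_pseries_min a b f g Ha Hb) as [r [Hr H]].
  exists r. split; [exact Hr|]. intros t Ht. destruct (H t Ht) as [Hf Hg].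
  exact (is_pseries_minus a b t _ _ Hf Hg).
Qed.

Lemma local_pseries_mul a b f g : local_pseries a f -> local_pseries b g ->
  local_pseries (PS_mult a b) (fun t => f t * g t).
Proof.
  intros Ha Hb. destruct (local_pseries_min a b f g Ha Hb) as [r [Hr H]].
  exists r. split; [exact Hr|]. intros t Ht.
  apply is_pseries_mult; try apply H, Ht;
    [apply (pseries_on_CV_radius a f r) | apply (pseries_on_CV_radius b g r)]; try exact Ht;
    intros u Hu; apply H, Hu.
Qed.

Lemma local_pseries_sumR N (a : nat -> nat -> R) (f : nat -> R -> R) :
  (forall j, local_pseries (a j) (f j)) ->
  local_pseries (fun m => sumR N (fun j => a j m)) (fun t => sumR N (fun j => f j t)).
Proof.
  intros H. induction N as [|N IH].
  - apply local_pseries_global. intros t. simpl.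
    apply (is_pseries_ext (trunc_seq 0 (fun _ => 0))); [intros [|m]; reflexivity|].
    apply (is_pseries_poly_eval 0 (fun _ => 0) t).
  - apply (local_pseries_add _ _ _ _ IH (H N)).
Qed.

Lemma continuous_eq0_right g e : continuity_pt g 0 -> 0 < e ->
  (forall t, 0 < t < e -> g t = 0) -> g 0 = 0.
Proof.
  intros Hc He H. apply NNPP. intros Hne.
  destruct (Hc (Rabs (g 0)) (Rabs_pos_lt _ Hne)) as [al [Hal Hx]].
  set (x := Rmin al e / 2).
  pose proof (Rmin_l al e). pose proof (Rmin_r al e). pose proof (Rmin_glb_lt al e 0 Hal He).
  assert (Hx0 : 0 <> x) by (unfold x; lra).
  assert (Hxal : Rabs x < al) by (rewrite Rabs_pos_eq; unfold x; lra).
  specialize (Hx x). simpl in Hx. unfold R_dist in Hx.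
  rewrite H, Rminus_0_l, Rabs_Ropp, Rminus_0_r in Hx by (unfold x; lra).
  specialize (Hx (conj (conj I Hx0) Hxal)). lra.
Qed.

(* The derivative is a power series near 0, hence continuous at 0, and vanishes on (0, e). *)
Lemma local_pseries_const_right a f e c m : local_pseries a f -> 0 < e ->
  (forall t, 0 <= t <= e -> f t = c) -> taylor_coef f (S m) = 0.
Proof.
  intros [r [Hr Ha]] He Hc.
  assert (CV := pseries_on_CV_radius a f r Ha).
  assert (HD : forall t, -r < t < r -> Derive_n f (S m) t = PSeries (PS_derive_n (S m) a) t).
  { intros t Ht. rewrite (Derive_n_ext_interval f (PSeries a) (S m) (-r) r t); [| |exact Ht].
    - apply Derive_n_PSeries, CV, Rabs_def1; lra.
    - intros u Hu. symmetry. apply is_pseries_unique, Ha, Rabs_def1; lra. }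
  unfold taylor_coef. rewrite HD by lra.
  rewrite (continuous_eq0_right _ (Rmin r e)); [unfold Rdiv; ring | | |].
  - apply PSeries_continuity. rewrite CV_radius_derive_n. apply CV. rewrite Rabs_R0. exact Hr.
  - apply Rmin_glb_lt; assumption.
  - intros t Ht. pose proof (Rmin_l r e). pose proof (Rmin_r r e).
    rewrite <- HD by lra. rewrite (Derive_n_ext_interval f (fun _ => c) (S m) 0 e t).
    + apply Derive_n_const.
    + intros u Hu. apply Hc. lra.
    + lra.
Qed.

Lemma vanishing_taylor_coef k f :
  vanishing k f <-> forall m, (1 <= m <= k)%nat -> taylor_coef f m = 0.
Proof.
  split; intros H m Hm.
  - unfold taylor_coef. rewrite H by exact Hm. unfold Rdiv. ring.
  - rewrite Derive_n_taylor_coef, H by exact Hm. ring.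
Qed.

(** * Congruences modulo powers of t *)

(* The quotient is required to be a polynomial so that Taylor coefficients of the two sides
   can be compared (tcong_taylor_coef). *)
Definition tcong (k : nat) (f g : R -> R) : Prop :=
  exists h, is_poly h /\ forall t, f t = g t + t ^ k * h t.

Lemma tcong_refl k f : tcong k f f.
Proof. exists (fun _ => 0). split; [apply is_poly_const | intros; ring]. Qed.

Lemma tcong_ext k f g f' g' : (forall t, f t = f' t) -> (forall t, g t = g' t) ->
  tcong k f g -> tcong k f' g'.
Proof.
  intros Ef Eg [h [Hh H]]. exists h. split; [exact Hh|]. intros t. rewrite <- Ef, <- Eg. apply H.
Qed.

Lemma tcong_sym k f g : tcong k f g -> tcong k g f.
Proof.
  intros [h [Hh H]]. exists (fun t => (-1) * h t). split; [apply is_poly_scal, Hh|].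
  intros t. rewrite H. ring.
Qed.

Lemma tcong_trans k f g u : tcong k f g -> tcong k g u -> tcong k f u.
Proof.
  intros [h1 [H1 E1]] [h2 [H2 E2]]. exists (fun t => h1 t + h2 t).
  split; [apply is_poly_add; assumption|]. intros t. rewrite E1, E2. ring.
Qed.

Lemma tcong_add k f1 g1 f2 g2 : tcong k f1 g1 -> tcong k f2 g2 ->
  tcong k (fun t => f1 t + f2 t) (fun t => g1 t + g2 t).
Proof.
  intros [h1 [H1 E1]] [h2 [H2 E2]]. exists (fun t => h1 t + h2 t).
  split; [apply is_poly_add; assumption|]. intros t. rewrite E1, E2. ring.
Qed.

Lemma tcong_sub k f1 g1 f2 g2 : tcong k f1 g1 -> tcong k f2 g2 ->
  tcong k (fun t => f1 t - f2 t) (fun t => g1 t - g2 t).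
Proof.
  intros [h1 [H1 E1]] [h2 [H2 E2]]. exists (fun t => h1 t - h2 t).
  split; [apply is_poly_sub; assumption|]. intros t. rewrite E1, E2. ring.
Qed.

Lemma tcong_scal k a f g : tcong k f g -> tcong k (fun t => a * f t) (fun t => a * g t).
Proof.
  intros [h [Hh E]]. exists (fun t => a * h t). split; [apply is_poly_scal, Hh|].
  intros t. rewrite E. ring.
Qed.

Lemma tcong_mul k f1 g1 f2 g2 : is_poly f2 -> is_poly g1 -> tcong k f1 g1 -> tcong k f2 g2 ->
  tcong k (fun t => f1 t * f2 t) (fun t => g1 t * g2 t).
Proof.
  intros P2 Q1 [h1 [H1 E1]] [h2 [H2 E2]]. exists (fun t => h1 t * f2 t + g1 t * h2 t).
  split; [apply is_poly_add; apply is_poly_mul; assumption|]. intros t. rewrite E1, E2. ring.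
Qed.

Lemma tcong_pow k f g m : is_poly f -> is_poly g -> tcong k f g ->
  tcong k (fun t => f t ^ m) (fun t => g t ^ m).
Proof.
  intros Pf Pg H. induction m as [|m IH]; [apply tcong_refl|].
  apply tcong_mul; [apply is_poly_pow, Pf | exact Pg | exact H | exact IH].
Qed.

Lemma tcong_sumR k N (F G : nat -> R -> R) : (forall j, tcong k (F j) (G j)) ->
  tcong k (fun t => sumR N (fun j => F j t)) (fun t => sumR N (fun j => G j t)).
Proof.
  intros H. induction N as [|N IH]; [apply tcong_refl|]. apply tcong_add; [exact IH | apply H].
Qed.

Lemma tcong_weaken k k' f g : (k <= k')%nat -> tcong k' f g -> tcong k f g.
Proof.
  intros Hk [h [Hh E]]. exists (fun t => t ^ (k' - k) * h t). split; [apply is_poly_tpow_mul, Hh|].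
  intros t. rewrite E. replace k' with (k + (k' - k))%nat at 1 by lia. rewrite pow_add. ring.
Qed.

Lemma tcong_tpow_mul k m f g : tcong k f g ->
  tcong (m + k) (fun t => t ^ m * f t) (fun t => t ^ m * g t).
Proof. intros [h [Hh E]]. exists h. split; [exact Hh|]. intros t. rewrite E, pow_add. ring. Qed.

Lemma tcong_comp_mul k f g psi : tcong k f g -> is_poly psi ->
  tcong k (fun t => f (t * psi t)) (fun t => g (t * psi t)).
Proof.
  intros [h [Hh E]] Hpsi. exists (fun t => psi t ^ k * h (t * psi t)). split.
  - apply is_poly_mul; [apply is_poly_pow, Hpsi|].
    apply is_poly_comp; [exact Hh | apply is_poly_mul_id, Hpsi].
  - intros t. rewrite E, Rpow_mult_distr. ring.
Qed.

Lemma tcong_taylor_coef k f g m : is_poly g -> tcong k f g -> (m < k)%nat ->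
  taylor_coef f m = taylor_coef g m.
Proof.
  intros Pg [h [Hh E]] Hm.
  destruct (is_poly_pseries g Pg) as [a Ha]. destruct (is_poly_pseries h Hh) as [b Hb].
  rewrite (taylor_coef_local_pseries a g m) by (apply local_pseries_global, Ha).
  rewrite (taylor_coef_local_pseries (PS_plus a (PS_incr_n b k)) f m).
  - unfold PS_plus. rewrite PS_incr_n_simplify.
    destruct (Compare_dec.le_lt_dec k m); [lia|]. apply Rplus_0_r.
  - apply local_pseries_global. intros t. rewrite E.
    pose proof (is_pseries_incr_n b k t (h t) (Hb t)) as Hinc. rewrite pow_n_pow in Hinc.
    exact (is_pseries_plus a _ t (g t) _ (Ha t) Hinc).
Qed.

Lemma tcong_taylor_poly k f : is_poly f -> tcong k f (poly_eval k (taylor_coef f)).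
Proof.
  intros [N [c E]].
  assert (C : forall m, taylor_coef f m = trunc_seq N c m).
  { intros m. rewrite <- taylor_coef_poly_eval. apply taylor_coef_ext, E. }
  exists (poly_eval (N - k) (fun i => trunc_seq N c (k + i))). split.
  - exists (N - k)%nat, (fun i => trunc_seq N c (k + i)). reflexivity.
  - intros t. rewrite E, <- (poly_eval_trunc N (k + (N - k)) c t) by lia.
    rewrite poly_eval_split. f_equal.
    unfold poly_eval. apply sumR_ext. intros. rewrite C. reflexivity.
Qed.

Lemma tcong_const_vanishing k f c : tcong (S k) f (fun _ => c) -> vanishing k f.
Proof.
  intros H. apply vanishing_taylor_coef. intros m Hm.
  rewrite (tcong_taylor_coef _ _ _ m (is_poly_const c) H) by lia.
  destruct m as [|m]; [lia|]. apply taylor_coef_const_S.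
Qed.

Lemma vanishing_tcong_const k f : is_poly f -> vanishing k f -> tcong (S k) f (fun _ => f 0).
Proof.
  intros Pf Hv. apply tcong_ext with f (poly_eval (S k) (taylor_coef f));
    [reflexivity| |apply tcong_taylor_poly, Pf].
  intros t. unfold poly_eval. rewrite sumR_shift, sumR_eq0, taylor_coef_0; [simpl; ring|].
  intros i Hi. rewrite (proj1 (vanishing_taylor_coef k f) Hv) by lia. ring.
Qed.

Definition taylor_cfg (q : R -> config) (m : nat) : config :=
  fun i j => taylor_coef (fun t => q t i j) m.

Definition sqdist_coef (d : nat) (a : nat -> config) (v w : nat) (m : nat) : R :=
  sumR d (fun j => PS_mult (fun i => a i v j - a i w j) (fun i => a i v j - a i w j) m).

Lemma local_pseries_sqdist d (a : nat -> config) (F : R -> config) v w :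
  (forall i j, local_pseries (fun m => a m i j) (fun t => F t i j)) ->
  local_pseries (sqdist_coef d a v w) (fun t => sqdist d (F t v) (F t w)).
Proof.
  intros H. apply (local_pseries_sumR d _ (fun j t => (F t v j - F t w j) * (F t v j - F t w j))).
  intros j. apply local_pseries_mul; apply local_pseries_sub; apply H.
Qed.

Lemma taylor_coef_sqdist d (F : R -> config) v w m :
  (forall i j, local_pseries (taylor_coef (fun t => F t i j)) (fun t => F t i j)) ->
  taylor_coef (fun t => sqdist d (F t v) (F t w)) m = sqdist_coef d (taylor_cfg F) v w m.
Proof. intros H. apply taylor_coef_local_pseries, local_pseries_sqdist, H. Qed.

Lemma sqdist_coef_ext d (a b : nat -> config) v w m : (forall i, (i <= m)%nat -> a i = b i) ->
  sqdist_coef d a v w m = sqdist_coef d b v w m.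
Proof.
  intros H. unfold sqdist_coef, PS_mult. apply sumR_ext. intros j _. apply sum_eq. intros i Hi.
  rewrite (H i), (H (m - i)%nat) by lia. reflexivity.
Qed.

Lemma sqdist_coef_1 d (a : nat -> config) v w :
  sqdist_coef d a v w 1 = 2 * dotR d (vsub (a 0%nat v) (a 0%nat w)) (vsub (a 1%nat v) (a 1%nat w)).
Proof.
  unfold sqdist_coef, dotR, vsub, PS_mult. rewrite <- sumR_scal. apply sumR_ext. intros j _.
  simpl. ring.
Qed.

Lemma is_poly_sqdist d (F : R -> config) v w : (forall i j, is_poly (fun t => F t i j)) ->
  is_poly (fun t => sqdist d (F t v) (F t w)).
Proof.
  intros H. apply (is_poly_sumR d (fun j t => (F t v j - F t w j) * (F t v j - F t w j))).
  intros j. apply is_poly_mul; apply is_poly_sub; apply H.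
Qed.

Lemma tcong_sqdist k d (F G : R -> config) v w :
  (forall i j, is_poly (fun t => F t i j)) -> (forall i j, is_poly (fun t => G t i j)) ->
  (forall i j, tcong k (fun t => F t i j) (fun t => G t i j)) ->
  tcong k (fun t => sqdist d (F t v) (F t w)) (fun t => sqdist d (G t v) (G t w)).
Proof.
  intros HF HG H.
  apply (tcong_sumR k d (fun j t => (F t v j - F t w j) * (F t v j - F t w j))
                        (fun j t => (G t v j - G t w j) * (G t v j - G t w j))).
  intros j. apply tcong_mul; try apply is_poly_sub; try apply HF; try apply HG;
    apply tcong_sub; apply H.
Qed.

Definition pinned_entry (n d l i j : nat) : Prop :=
  ((n <= i)%nat \/ (d <= j)%nat) \/ i = 0%nat \/ ((1 <= i <= l)%nat /\ (i <= j)%nat).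

Lemma pinned_pos_entries n d l q :
  pinned_pos n d l q <-> forall i j, pinned_entry n d l i j -> q i j = 0.
Proof.
  unfold pinned_pos, supported, pinned_entry. split.
  - intros [Hs [H0 Hl]] i j [Hij|[->|Hij]]; [apply Hs | apply H0 | apply Hl]; tauto.
  - intros H. repeat split; intros; apply H; tauto.
Qed.

Lemma pinned_pos_eq0 n d l q i j : pinned_pos n d l q -> pinned_entry n d l i j -> q i j = 0.
Proof. intros Hq. apply pinned_pos_entries, Hq. Qed.

(** * Polynomial trajectories and reparametrisation *)

Definition traj_seq (p : config) (c : nat -> config) (i j m : nat) : R :=
  match m with O => p i j | S _ => c m i j end.

Lemma poly_traj_poly_eval p k c t i j :
  poly_traj p k c t i j = poly_eval (S k) (traj_seq p c i j) t.
Proof. unfold poly_traj, poly_eval. rewrite sumR_shift. simpl. rewrite Rmult_1_r. reflexivity. Qed.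

Lemma is_poly_poly_traj p k c i j : is_poly (fun t => poly_traj p k c t i j).
Proof. exists (S k), (traj_seq p c i j). intros t. apply poly_traj_poly_eval. Qed.

Lemma poly_traj_0 p k c : poly_traj p k c 0 = p.
Proof.
  apply functional_extensionality; intros i. apply functional_extensionality; intros j.
  unfold poly_traj. rewrite sumR_eq0; [ring|]. intros m _. simpl. ring.
Qed.

Lemma taylor_cfg_poly_traj_0 p k c : taylor_cfg (poly_traj p k c) 0 = p.
Proof.
  apply functional_extensionality; intros i. apply functional_extensionality; intros j.
  unfold taylor_cfg. rewrite taylor_coef_0, poly_traj_0. reflexivity.
Qed.

Lemma taylor_cfg_poly_traj_S p k c m : (S m <= k)%nat ->
  taylor_cfg (poly_traj p k c) (S m) = c (S m).
Proof.
  intros Hm. apply functional_extensionality; intros i. apply functional_extensionality; intros j.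
  unfold taylor_cfg. rewrite (taylor_coef_ext _ (poly_eval (S k) (traj_seq p c i j)))
    by (intros; apply poly_traj_poly_eval).
  rewrite taylor_coef_poly_eval. unfold trunc_seq.
  replace (Nat.ltb (S m) (S k)) with true by (symmetry; apply Nat.ltb_lt; lia). reflexivity.
Qed.

Lemma local_pseries_poly_traj p k c i j :
  local_pseries (taylor_coef (fun t => poly_traj p k c t i j)) (fun t => poly_traj p k c t i j).
Proof. apply is_poly_local_pseries, is_poly_poly_traj. Qed.

Lemma poly_traj_update p k c c' s t i j : (s < k)%nat -> (forall m, m <> S s -> c' m = c m) ->
  poly_traj p k c' t i j = poly_traj p k c t i j + (c' (S s) i j - c (S s) i j) * t ^ S s.
Proof.
  intros Hs Hc. unfold poly_traj.
  rewrite (sumR_update k s _ (fun m => c (S m) i j * t ^ S m)); [ring | exact Hs|].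
  intros m Hm. rewrite Hc by lia. reflexivity.
Qed.

Lemma poly_traj_entry_eq0 p k c t i j : p i j = 0 -> (forall m, c m i j = 0) ->
  poly_traj p k c t i j = 0.
Proof.
  intros Hp Hc. unfold poly_traj. rewrite Hp, sumR_eq0; [ring|]. intros m _. rewrite Hc. ring.
Qed.

Lemma pinned_pos_poly_traj n d l p k c t :
  pinned_pos n d l p -> (forall m, pinned_pos n d l (c m)) -> pinned_pos n d l (poly_traj p k c t).
Proof.
  intros Hp Hc. apply pinned_pos_entries. intros i j Hij.
  apply poly_traj_entry_eq0; [|intros m]; eapply pinned_pos_eq0; eauto.
Qed.

(* Only the coefficients of order <= k are read by [poly_traj p k], so
   [poly_traj p k (reparam p k c psi)] is the truncation of t |-> poly_traj p k c (t psi(t)). *)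
Definition reparam (p : config) (k : nat) (c : nat -> config) (psi : R -> R) : nat -> config :=
  taylor_cfg (fun t => poly_traj p k c (t * psi t)).

Lemma is_poly_poly_traj_reparam p k c psi i j : is_poly psi ->
  is_poly (fun t => poly_traj p k c (t * psi t) i j).
Proof.
  intros Hpsi. apply (is_poly_comp (fun u => poly_traj p k c u i j));
    [apply is_poly_poly_traj | apply is_poly_mul_id, Hpsi].
Qed.

Lemma tcong_reparam p k c psi i j : is_poly psi ->
  tcong (S k) (fun t => poly_traj p k (reparam p k c psi) t i j)
              (fun t => poly_traj p k c (t * psi t) i j).
Proof.
  intros Hpsi. apply tcong_sym.
  eapply tcong_ext; [reflexivity| |apply tcong_taylor_poly, is_poly_poly_traj_reparam, Hpsi].
  intros t. rewrite poly_traj_poly_eval. unfold poly_eval.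
  apply sumR_ext. intros [|m] _; [|reflexivity].
  rewrite taylor_coef_0, Rmult_0_l, poly_traj_0. reflexivity.
Qed.

Lemma pinned_pos_reparam n d l p k c psi m : pinned_pos n d l p ->
  (forall m, pinned_pos n d l (c m)) -> pinned_pos n d l (reparam p k c psi m).
Proof.
  intros Hp Hc. apply pinned_pos_entries. intros i j Hij. unfold reparam, taylor_cfg.
  rewrite (taylor_coef_ext _ (fun _ => 0)).
  - destruct m; [apply taylor_coef_0 | apply taylor_coef_const_S].
  - intros t. apply poly_traj_entry_eq0; [|intros m']; eapply pinned_pos_eq0; eauto.
Qed.

Lemma is_poly_reparam_factor g s : is_poly (fun t => 1 - g * t ^ s).
Proof. apply is_poly_sub; [apply is_poly_const | apply is_poly_scal, is_poly_pow, is_poly_id]. Qed.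

Lemma tcong_reparam_pow s g m : (1 <= s)%nat ->
  tcong (S (S s)) (fun t => (t * (1 - g * t ^ s)) ^ S (S m)) (fun t => t ^ S (S m)).
Proof.
  intros Hs.
  assert (Hpsi : tcong s (fun t => 1 - g * t ^ s) (fun _ => 1)).
  { exists (fun _ => - g). split; [apply is_poly_const | intros; ring]. }
  apply (tcong_pow _ _ _ (S (S m))) in Hpsi; [|apply is_poly_reparam_factor | apply is_poly_const].
  apply (tcong_tpow_mul _ (S (S m))) in Hpsi. apply (tcong_weaken _ (S (S m) + s)); [lia|].
  eapply tcong_ext; [| |exact Hpsi]; intros t; [rewrite Rpow_mult_distr | rewrite pow1]; ring.
Qed.

Lemma tcong_reparam_traj p k c s g i j : (1 <= s)%nat -> (1 <= k)%nat ->
  tcong (S (S s)) (fun t => poly_traj p k c (t * (1 - g * t ^ s)) i j)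
                  (fun t => poly_traj p k c t i j - g * c 1%nat i j * t ^ S s).
Proof.
  intros Hs Hk. destruct k as [|k]; [lia|].
  set (phi := fun t => t * (1 - g * t ^ s)).
  assert (Hhigh : tcong (S (S s)) (fun t => sumR k (fun m => c (S (S m)) i j * phi t ^ S (S m)))
                                  (fun t => sumR k (fun m => c (S (S m)) i j * t ^ S (S m)))).
  { apply (tcong_sumR _ k (fun m t => c (S (S m)) i j * phi t ^ S (S m))).
    intros m. apply tcong_scal, tcong_reparam_pow, Hs. }
  pose proof (tcong_add _ _ _ _ _ (tcong_refl _ (fun t => p i j + c 1%nat i j * phi t)) Hhigh) as H.
  eapply tcong_ext; [| |exact H]; intros t; unfold poly_traj, phi; rewrite sumR_shift; simpl; ring.
Qed.

Lemma reparam_coefs p k c s g : (1 <= s)%nat -> (S s <= k)%nat ->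
  (forall m, (1 <= m <= s)%nat -> reparam p k c (fun t => 1 - g * t ^ s) m = c m) /\
  reparam p k c (fun t => 1 - g * t ^ s) (S s) = (fun i j => c (S s) i j - g * c 1%nat i j).
Proof.
  intros Hs Hsk.
  set (c' := fun m => if Nat.eqb m (S s) then (fun i j => c (S s) i j - g * c 1%nat i j) else c m).
  assert (Hc' : forall m, (1 <= m <= S s)%nat -> reparam p k c (fun t => 1 - g * t ^ s) m = c' m).
  { intros [|m] Hm; [lia|]. rewrite <- (taylor_cfg_poly_traj_S p k c' m) by lia.
    apply functional_extensionality; intros i. apply functional_extensionality; intros j.
    apply (tcong_taylor_coef (S (S s))); [apply is_poly_poly_traj | |lia].
    eapply tcong_ext; [reflexivity| |apply tcong_reparam_traj; lia].
    intros t. rewrite (poly_traj_update p k c c' s); [| lia |].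
    - unfold c'. rewrite Nat.eqb_refl. ring.
    - intros m' Hm'. unfold c'. apply Nat.eqb_neq in Hm'. rewrite Hm'. reflexivity. }
  split.
  - intros m Hm. rewrite Hc' by lia. unfold c'.
    replace (Nat.eqb m (S s)) with false by (symmetry; apply Nat.eqb_neq; lia). reflexivity.
  - rewrite Hc' by lia. unfold c'. rewrite Nat.eqb_refl. reflexivity.
Qed.

Section Trajectories.

Variables (n d l : nat) (E : nat -> nat -> Prop) (p : config).

Lemma trajectory_local_pseries q : trajectory n d l p q ->
  forall i j, local_pseries (taylor_coef (fun t => q t i j)) (fun t => q t i j).
Proof.
  intros [eps [Heps [[delta [Hdelta Han]] _]]] i j.
  apply (analytic_on_local_pseries _ _ (Han i j)). lra.
Qed.

Lemma taylor_cfg_trajectory_0 q : trajectory n d l p q -> taylor_cfg q 0 = p.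
Proof.
  intros [_ [_ [_ [Hq0 _]]]].
  apply functional_extensionality; intros i. apply functional_extensionality; intros j.
  unfold taylor_cfg. rewrite taylor_coef_0. apply Hq0.
Qed.

Lemma pinned_pos_taylor_cfg q m : trajectory n d l p q -> pinned_pos n d l (taylor_cfg q m).
Proof.
  intros Hq. pose proof (trajectory_local_pseries q Hq) as Hloc.
  destruct Hq as [eps [Heps [_ [_ [Hpin _]]]]].
  apply pinned_pos_entries. intros i j Hij. unfold taylor_cfg. destruct m as [|m].
  - rewrite taylor_coef_0. apply (pinned_pos_eq0 n d l (q 0)); [apply Hpin; lra | exact Hij].
  - apply (local_pseries_const_right _ _ eps 0 m (Hloc i j) Heps).
    intros t Ht. apply (pinned_pos_eq0 n d l (q t)); [apply Hpin, Ht | exact Hij].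
Qed.

Lemma active1_taylor_cfg q : traj_active n d 1 q ->
  exists i j, (i < n)%nat /\ (j < d)%nat /\ taylor_cfg q 1 i j <> 0.
Proof.
  intros [_ Hnv]. apply NNPP. intros Hno. apply Hnv. intros i j Hi Hj.
  apply vanishing_taylor_coef. intros m Hm. replace m with 1%nat by lia.
  apply NNPP. intros Hne. apply Hno. exists i, j. auto.
Qed.

Lemma meas_vanishing_sqdist_coef k q : trajectory n d l p q -> meas_vanishing d E k q ->
  forall v w m, E v w -> (1 <= m <= k)%nat -> sqdist_coef d (taylor_cfg q) v w m = 0.
Proof.
  intros Hq Hm v w m Hvw Hmk. rewrite <- taylor_coef_sqdist by (apply trajectory_local_pseries, Hq).
  apply (vanishing_taylor_coef k); [apply Hm, Hvw | exact Hmk].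
Qed.

Lemma inK_coef1 (a : nat -> config) : a 0%nat = p -> pinned_pos n d l (a 1%nat) ->
  (forall v w, E v w -> sqdist_coef d a v w 1 = 0) -> inK n d l E p (a 1%nat).
Proof.
  intros Ha0 Hpin H. split; [exact Hpin|]. intros v w Hvw.
  specialize (H v w Hvw). rewrite sqdist_coef_1, Ha0 in H. lra.
Qed.

Lemma pinned_decomp_K (Kbar : config -> Prop) (a : config) :
  dimK_one n d l E p -> complement_K n d l E p Kbar -> inK n d l E p a -> a <> cfg0 ->
  forall x, pinned_pos n d l x -> exists g z, Kbar z /\ x = cfg_add (cfg_scale g a) z.
Proof.
  intros [V [_ [_ Vspan]]] [_ [_ [_ [_ [_ Hdec]]]]] Ha Ha0 x Hx.
  destruct (Vspan a Ha) as [lam ->].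
  assert (Hlam : lam <> 0).
  { intros ->. apply Ha0. apply functional_extensionality; intros i.
    apply functional_extensionality; intros j. unfold cfg_scale, cfg0. ring. }
  destruct (Hdec x Hx) as [y [z [Ky [Kz ->]]]]. destruct (Vspan y Ky) as [c ->].
  exists (c / lam), z. split; [exact Kz|].
  apply functional_extensionality; intros i. apply functional_extensionality; intros j.
  unfold cfg_add, cfg_scale. field. exact Hlam.
Qed.

Variable k : nat.

Definition keeps_lengths (c : nat -> config) : Prop :=
  forall v w, E v w -> tcong (S k) (fun t => sqdist d (poly_traj p k c t v) (poly_traj p k c t w))
                                  (fun _ => sqdist d (p v) (p w)).

Lemma keeps_lengths_truncation (a : nat -> config) : a 0%nat = p ->
  (forall v w m, E v w -> (1 <= m <= k)%nat -> sqdist_coef d a v w m = 0) -> keeps_lengths a.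
Proof.
  intros Ha0 Ha v w Hvw.
  set (f := fun t => sqdist d (poly_traj p k a t v) (poly_traj p k a t w)).
  apply (tcong_ext _ f (fun _ => f 0));
    [reflexivity | intros; unfold f; rewrite poly_traj_0; reflexivity |].
  apply vanishing_tcong_const; [apply is_poly_sqdist; intros; apply is_poly_poly_traj|].
  apply vanishing_taylor_coef. intros m Hm. unfold f.
  rewrite taylor_coef_sqdist by (intros; apply local_pseries_poly_traj).
  rewrite <- (Ha v w m Hvw Hm). apply sqdist_coef_ext. intros [|i] Hi.
  - rewrite taylor_cfg_poly_traj_0. symmetry. exact Ha0.
  - apply taylor_cfg_poly_traj_S. lia.
Qed.

Lemma keeps_lengths_reparam c psi :
  is_poly psi -> keeps_lengths c -> keeps_lengths (reparam p k c psi).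
Proof.
  intros Hpsi Hc v w Hvw. set (Q := fun t => poly_traj p k c (t * psi t)).
  apply tcong_trans with (fun t => sqdist d (Q t v) (Q t w)).
  - apply (tcong_sqdist _ _ (poly_traj p k (reparam p k c psi)) Q); intros;
      [apply is_poly_poly_traj | apply is_poly_poly_traj_reparam, Hpsi |].
    apply tcong_reparam, Hpsi.
  - exact (tcong_comp_mul _ _ _ psi (Hc v w Hvw) Hpsi).
Qed.

Lemma poly_traj_flex c i0 j0 : (1 <= k)%nat -> pinned_pos n d l p ->
  (forall m, pinned_pos n d l (c m)) -> keeps_lengths c ->
  (i0 < n)%nat -> (j0 < d)%nat -> c 1%nat i0 j0 <> 0 ->
  flex n d l E p 1 k (poly_traj p k c).
Proof.
  intros Hk Hp Hc Hlen Hi0 Hj0 Hnz.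
  assert (Hc1 : taylor_coef (fun t => poly_traj p k c t i0 j0) 1 = c 1%nat i0 j0).
  { exact (f_equal (fun x => x i0 j0) (taylor_cfg_poly_traj_S p k c 0 Hk)). }
  split; [|split].
  - exists 1. split; [lra|]. split; [|split; [|split]].
    + exists 1. split; [lra|]. intros i j. apply is_poly_analytic_on, is_poly_poly_traj.
    + intros i j. rewrite poly_traj_0. reflexivity.
    + intros t _. apply pinned_pos_poly_traj; assumption.
    + apply NNPP. intros Hconst. apply Hnz. rewrite <- Hc1.
      apply (local_pseries_const_right _ _ 1 (p i0 j0) 0 (local_pseries_poly_traj p k c i0 j0));
        [lra|].
      intros t Ht. apply NNPP. intros Hne. apply Hconst.
      exists t. split; [exact Ht|]. exists i0, j0. exact Hne.
  - split; [intros i j _ _ m Hm; lia|]. intros Hvan. apply Hnz. rewrite <- Hc1.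
    apply (vanishing_taylor_coef 1); [apply Hvan; assumption | lia].
  - intros v w Hvw. exact (tcong_const_vanishing _ _ _ (Hlen v w Hvw)).
Qed.

Variables (Kbar : config -> Prop) (a : config).

Definition normal_jet (s : nat) (c : nat -> config) : Prop :=
  c 1%nat = a /\ (forall m, pinned_pos n d l (c m)) /\
  (forall m, (2 <= m <= s)%nat -> Kbar (c m)) /\ keeps_lengths c.

Hypothesis pinned_p : pinned_pos n d l p.
Hypothesis decomp_a :
  forall x, pinned_pos n d l x -> exists g z, Kbar z /\ x = cfg_add (cfg_scale g a) z.

Lemma normal_jet_step s c : (1 <= s)%nat -> (S s <= k)%nat -> normal_jet s c ->
  exists c', normal_jet (S s) c'.
Proof.
  intros Hs Hsk [Hc1 [Hpin [HK Hlen]]].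
  destruct (decomp_a (c (S s)) (Hpin _)) as [g [z [Hz Hdec]]].
  destruct (reparam_coefs p k c s g Hs Hsk) as [Hlow Htop].
  exists (reparam p k c (fun t => 1 - g * t ^ s)). split; [|split; [|split]].
  - rewrite Hlow by lia. exact Hc1.
  - intros m. apply pinned_pos_reparam; assumption.
  - intros m Hm. destruct (Nat.eq_dec m (S s)) as [->|Hne].
    + replace (reparam p k c _ (S s)) with z; [exact Hz|]. rewrite Htop, Hdec, Hc1.
      apply functional_extensionality; intros i. apply functional_extensionality; intros j.
      unfold cfg_add, cfg_scale. ring.
    + rewrite Hlow by lia. apply HK. lia.
  - apply keeps_lengths_reparam; [apply is_poly_reparam_factor | exact Hlen].
Qed.

Lemma normal_jet_full c : normal_jet 1 c -> exists c', normal_jet k c'.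
Proof.
  intros Hc. destruct (Nat.le_gt_cases 1 k) as [Hk|Hk].
  - enough (H : forall s, (1 <= s <= k)%nat -> exists c', normal_jet s c') by (apply H; lia).
    intros s Hs. induction s as [|s IH]; [lia|].
    destruct (Nat.eq_dec s 0) as [->|Hs0]; [exists c; exact Hc|].
    destruct IH as [c' Hc']; [lia|]. apply (normal_jet_step s c'); [lia | lia | exact Hc'].
  - exists c. destruct Hc as [Hc1 [Hpin [_ Hlen]]].
    split; [exact Hc1 | split; [exact Hpin | split; [intros; lia | exact Hlen]]].
Qed.

End Trajectories.

Theorem lemma2p21 (n d l : nat) (E : nat -> nat -> Prop) (p : config)
  (Kbar : config -> Prop) (k : nat) :
  framework n d E p ->
  pinned n d l p ->
  dimK_one n d l E p ->
  complement_K n d l E p Kbar ->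
  (1 <= k)%nat ->
  (exists q, flex n d l E p 1 k q) ->
  exists c : nat -> config,
    (forall m, (2 <= m <= k)%nat -> Kbar (c m)) /\
    flex n d l E p 1 k (poly_traj p k c).
Proof.
  intros _ [_ [_ [_ Hp]]] HdimK Hcomp Hk [q [Hq [Hact Hmeas]]].
  set (A := taylor_cfg q).
  assert (HA0 : A 0%nat = p) by exact (taylor_cfg_trajectory_0 n d l p q Hq).
  assert (HApin : forall m, pinned_pos n d l (A m)).
  { intros m. apply (pinned_pos_taylor_cfg n d l p), Hq. }
  assert (HAlen := meas_vanishing_sqdist_coef n d l E p k q Hq Hmeas).
  destruct (active1_taylor_cfg n d q Hact) as [i0 [j0 [Hi0 [Hj0 Hnz]]]].
  assert (HK : inK n d l E p (A 1%nat)).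
  { apply inK_coef1; [exact HA0 | apply HApin | intros v w Hvw; apply HAlen; [exact Hvw | lia]]. }
  assert (HA1 : A 1%nat <> cfg0) by (intros H; apply Hnz; exact (f_equal (fun x => x i0 j0) H)).
  pose proof (pinned_decomp_K n d l E p Kbar _ HdimK Hcomp HK HA1) as Hdecomp.
  destruct (normal_jet_full n d l E p k Kbar (A 1%nat) Hp Hdecomp A)
    as [c [Hc1 [Hcpin [HcK Hclen]]]].
  { split; [reflexivity | split; [exact HApin | split; [intros; lia |]]].
    apply keeps_lengths_truncation; assumption. }
  exists c. split; [exact HcK|].
  apply (poly_traj_flex n d l E p k c i0 j0); try assumption. rewrite Hc1. exact Hnz.
Qed.
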